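(* Let $G$ be a strongly connected directed graph on a finite vertex set (self-loops allowed) and let $\beta$ be a balanced graph function on $G$. Then $\beta$ is the unique balanced graph function in its equivalence class if and only if the graph $G_\beta^w$ is strongly connected for every real $w$.
   Context: A graph function on $G$ assigns a real weight $\beta_{uv}$ to every edge $(u,v)$ of $G$. For a vertex $v$, $\beta_v^{\text{in}}=\max_{u:(u,v)\in G}\beta_{uv}$ and $\beta_v^{\text{out}}=\max_{w:(v,w)\in G}\beta_{vw}$; $\beta$ is balanced if $\beta_v^{\text{in}}=\beta_v^{\text{out}}$ for all $v$. Two graph functions $\alpha,\gamma$ on $G$ are equivalent if $\sum_{\ell=1}^k(\alpha_{v_\ell v_{\ell+1}}-\gamma_{v_\ell v_{\ell+1}})=0$ for every directed cycle $(v_1,\dots,v_k)$ of $G$ (with $v_{k+1}=v_1$). For real $w$, $G_\beta^w$ is the subgraph of $G$ consisting of the edges $(u,v)$ with $\beta_{uv}\ge w$, with isolated vertices removed (a vertex carrying a self-loop is not considered isolated). *)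

From mathcomp Require Import all_boot all_order all_algebra.
Set Implicit Arguments. Unset Strict Implicit. Unset Printing Implicit Defensive.
Import Order.TTheory GRing.Theory Num.Theory.
Local Open Scope ring_scope.

(* A graph function on e assigns a real weight beta u v
   to every edge; we represent it as a function V -> V -> R of which only the
   values on edges matter. *)

Section GraphFun.
Variables (V : finType) (R : realFieldType).

(* maximum on option R, None standing for the max of the empty family *)
Definition omax (a b : option R) : option R :=
  match a, b with
  | None, _ => b
  | _, None => a
  | Some x, Some y => Some (Num.max x y)
  end.

Definition beta_in (e : rel V) (beta : V -> V -> R) (v : V) : option R :=
  \big[omax/None]_(u | e u v) Some (beta u v).

Definition beta_out (e : rel V) (beta : V -> V -> R) (v : V) : option R :=
  \big[omax/None]_(w | e v w) Some (beta v w).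

Definition balanced (e : rel V) (beta : V -> V -> R) : Prop :=
  forall v, beta_in e beta v = beta_out e beta v.

Definition directed_cycle (e : rel V) (c : seq V) : Prop :=
  [/\ 0 < size c, uniq c & cycle e c]%N.

Definition cycle_sum (f : V -> V -> R) (c : seq V) : R :=
  \sum_(p <- zip c (rot 1 c)) f p.1 p.2.

Definition equivalent (e : rel V) (alpha gamma : V -> V -> R) : Prop :=
  forall c, directed_cycle e c ->
    cycle_sum (fun u v => alpha u v - gamma u v) c = 0.

Definition eq_on_edges (e : rel V) (alpha gamma : V -> V -> R) : Prop :=
  forall u v, e u v -> alpha u v = gamma u v.

Definition thr_edge (e : rel V) (beta : V -> V -> R) (w : R) : rel V :=
  fun u v => e u v && (w <= beta u v).

(* vertices of a graph with isolated vertices removed: those incident to an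
   edge (a vertex with a self-loop is not isolated) *)
Definition nonisolated (e : rel V) (v : V) : bool :=
  [exists u, e u v || e v u].

Definition strongly_connected_on (P : pred V) (e : rel V) : Prop :=
  forall u v, P u -> P v -> connect e u v.

Definition strongly_connected (e : rel V) : Prop :=
  strongly_connected_on predT e.

Definition G_thr_strongly_connected (e : rel V) (beta : V -> V -> R) (w : R)
  : Prop :=
  strongly_connected_on (nonisolated (thr_edge e beta w)) (thr_edge e beta w).

Definition unique_balanced_in_class (e : rel V) (beta : V -> V -> R) : Prop :=
  forall gamma, balanced e gamma -> equivalent e beta gamma ->
    eq_on_edges e gamma beta.

End GraphFun.

(* If every threshold graph G_beta^w is strongly connected, let gamma be a balanced
   function equivalent to beta and M the largest value of max(beta, gamma) over the edges
   where they differ.  An edge where beta = M lies on a cycle of G_beta^M, on which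
   gamma - beta <= 0; an edge where gamma = M > beta lies, by balance of gamma, on a closed
   walk of edges with beta <= gamma and gamma >= M passing through G_beta^M.  Vanishing
   cycle sums then force gamma = beta on that edge, a contradiction.

   Conversely, every weighting of a strongly connected graph has a balanced equivalent
   shift beta(x,y) + p(y) - p(x): subtracting the longest-walk potential for the maximal
   cycle mean lam makes every edge <= lam and some cycle critical (all of weight lam);
   contracting that cycle (or deleting it if it is a loop) and inducting gives the
   balanced shift.  If some G_beta^w is not strongly connected, induct on the number of
   vertices and of distinct weights and look at the top weight L.  If G_beta^L is
   strongly connected, contract it, or, when it is a single loop, lower that loop to the
   next weight.  Otherwise it has a source component K and a sink component S: raise the
   potential by a small d on K, rebalance the graph with K and S contracted together, and
   the resulting potential differs by d between S and K, so it is not constant. *)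

From mathcomp Require Import all_boot all_order all_algebra.
From mathcomp Require Import ring lra zify.
Set Implicit Arguments. Unset Strict Implicit. Unset Printing Implicit Defensive.
Import Order.TTheory GRing.Theory Num.Theory.
Local Open Scope ring_scope.

Section BigOmax.
Variables (R : realFieldType) (I : finType).
Implicit Types (P : pred I) (F : I -> R).

Variant bigomax_spec P F : option R -> Prop :=
  | BigOmaxNone of (forall i, ~~ P i) : bigomax_spec P F None
  | BigOmaxSome i of P i & (forall j, P j -> F j <= F i) :
      bigomax_spec P F (Some (F i)).

Lemma bigomaxP P F : bigomax_spec P F (\big[@omax R/None]_(i | P i) Some (F i)).
Proof.
have : forall r : seq I,
    (\big[@omax R/None]_(i <- r | P i) Some (F i) = None /\ {in r, forall i, ~~ P i})
    \/ exists i, [/\ i \in r, P i, \big[@omax R/None]_(i <- r | P i) Some (F i) = Some (F i)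
                   & {in r, forall j, P j -> F j <= F i}].
  elim=> [|a r [[big0 nP]|[i [ir Pi big_i Fi]]]]; first by left; rewrite big_nil.
  - rewrite big_cons big0; case Pa: (P a); [right; exists a | left].
      by split=> //=[|j /predU1P[->//|/nP/negP]]; rewrite ?mem_head.
    by split=> // j /predU1P[->|/nP]; rewrite ?Pa.
  - rewrite big_cons big_i; right; case Pa: (P a); last first.
      by exists i; split=> [|||j /predU1P[->|/Fi]]; rewrite ?inE ?ir ?orbT ?Pa.
    have [Fai|Fia] := leP (F a) (F i).
    + exists i; split; rewrite ?inE ?ir ?orbT //=; first by rewrite max_r.
      by move=> j /predU1P[->|/Fi]//.
    + exists a; split; rewrite ?mem_head //=; first by rewrite max_l // ltW.
      move=> j /predU1P[->//|jr Pj]; exact: le_trans (Fi j jr Pj) (ltW Fia).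
case/(_ (index_enum I)) => [[-> nP]|[i [_ Pi -> Fi]]].
  by constructor=> i; apply: nP; rewrite mem_index_enum.
by constructor=> // j; apply: Fi; rewrite mem_index_enum.
Qed.

Lemma bigomax_none P F :
  (forall i, ~~ P i) -> \big[@omax R/None]_(i | P i) Some (F i) = None.
Proof. by move=> nP; case: bigomaxP => // i Pi; rewrite (negbTE (nP i)) in Pi. Qed.

Lemma bigomax_some P F i m : P i -> F i = m -> (forall j, P j -> F j <= m) ->
  \big[@omax R/None]_(i | P i) Some (F i) = Some m.
Proof.
move=> Pi <- Fi; case: bigomaxP => [/(_ i)|j Pj Fj]; first by rewrite Pi.
by congr Some; apply: le_anti; rewrite Fi ?Fj.
Qed.

End BigOmax.

Lemma eq_bigomax (R : realFieldType) (I J : finType) (P : pred I) (Q : pred J)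
    (F : I -> R) (G : J -> R) :
  (forall i, P i -> exists2 j, Q j & F i <= G j) ->
  (forall j, Q j -> exists2 i, P i & G j <= F i) ->
  \big[@omax R/None]_(i | P i) Some (F i) = \big[@omax R/None]_(j | Q j) Some (G j).
Proof.
move=> PQ QP; case: bigomaxP => [nP|i Pi Fi]; case: bigomaxP => [nQ|j Qj Gj] //.
- by have [i Pi _] := QP j Qj; rewrite (negbTE (nP i)) in Pi.
- by have [j Qj _] := PQ i Pi; rewrite (negbTE (nQ j)) in Qj.
- congr Some; apply: le_anti; apply/andP; split.
  + by have [j' Qj' le_ij'] := PQ i Pi; apply: le_trans le_ij' (Gj j' Qj').
  + by have [i' Pi' le_ji'] := QP j Qj; apply: le_trans le_ji' (Fi i' Pi').
Qed.

Section Walks.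
Variables (R : realFieldType) (V : finType).
Implicit Types (e F : rel V) (f beta : V -> V -> R) (p q : V -> R).

Definition shift beta p : V -> V -> R := fun x y => beta x y + p y - p x.

Lemma shiftD beta p q x y :
  shift (shift beta p) q x y = shift beta (fun v => p v + q v) x y.
Proof. by rewrite /shift; ring. Qed.

Fixpoint path_sum f x s : R :=
  if s is y :: s' then f x y + path_sum f y s' else 0.

Lemma path_sum_cat f x s1 s2 :
  path_sum f x (s1 ++ s2) = path_sum f x s1 + path_sum f (last x s1) s2.
Proof. by elim: s1 x => [|y s IH] x /=; rewrite ?add0r // IH addrA. Qed.

Lemma path_sum_rcons f x s y :
  path_sum f x (rcons s y) = path_sum f x s + f (last x s) y.
Proof. by rewrite -cats1 path_sum_cat /= addr0. Qed.

Lemma path_sum_shift f p x s :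
  path_sum (shift f p) x s = path_sum f x s + p (last x s) - p x.
Proof.
by elim: s x => [|y s IH] x /=; [rewrite add0r subrr | rewrite IH /shift; ring].
Qed.

Lemma path_sum_subr f (c : R) x s :
  path_sum (fun a b => f a b - c) x s = path_sum f x s - c * (size s)%:R.
Proof.
elim: s x => [|y s IH] x /=; first by rewrite mulr0 subr0.
by rewrite IH -addn1 natrD; ring.
Qed.

Lemma path_sum_le0 F f x s : path F x s ->
  (forall a b, F a b -> f a b <= 0) -> path_sum f x s <= 0.
Proof.
move=> + f_le0; elim: s x => [|y s IH] x //= /andP[Fxy Fs].
by rewrite -[0]addr0 lerD ?f_le0 ?IH.
Qed.

Lemma cycle_sum_cons f x s : cycle_sum f (x :: s) = path_sum f x (rcons s x).
Proof.
rewrite /cycle_sum rot1_cons; move: {2 4}x; elim: s x => [|y s IH] x z /=.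
  by rewrite big_cons big_nil.
by rewrite big_cons IH.
Qed.

Lemma cycle_sum_shift f p c : cycle_sum (shift f p) c = cycle_sum f c.
Proof.
case: c => [|x s]; first by rewrite /cycle_sum !big_nil.
by rewrite !cycle_sum_cons path_sum_shift last_rcons addrK.
Qed.

Lemma equivalent_shift e beta p : equivalent e beta (shift beta p).
Proof.
move=> c _; rewrite /cycle_sum sumrB.
by rewrite -[X in _ - X]/(cycle_sum (shift beta p) c) cycle_sum_shift subrr.
Qed.

Lemma walk_le0_eq0 e F f u v : subrel F e ->
  (forall c, directed_cycle e c -> cycle_sum f c = 0) ->
  (forall x y, F x y -> f x y <= 0) -> F u v -> connect F v u -> f u v = 0.
Proof.
move=> sFe cycle0 f_le0 Fuv /connectP[s Fs def_u]; apply: le_anti.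
rewrite f_le0 //= leNgt; apply/negP => f_lt0.
move: Fuv f_lt0; rewrite def_u; case: (shortenP Fs) => s' Fs' uniq_s' _ Fuv f_lt0.
have cyc : directed_cycle e (v :: s').
  by split=> //; apply: (sub_cycle sFe); rewrite /= rcons_path Fs'.
have := cycle0 _ cyc; rewrite cycle_sum_cons path_sum_rcons => sum0.
have := path_sum_le0 Fs' f_le0; rewrite -(addrK (f (last v s') v) (path_sum f v s')) sum0.
by rewrite sub0r oppr_le0 leNgt f_lt0.
Qed.

Lemma connect_nonconst_edge F p a b : connect F a b -> p a != p b ->
  exists x y, F x y /\ p x != p y.
Proof.
move=> /connectP[s + ->]; elim: s a => [|y s IH] a /=; first by rewrite eqxx.
case/andP=> Fay Fs pa; case: (eqVneq (p a) (p y)) => [pay|]; last by exists a, y.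
by apply: IH Fs _; rewrite -pay.
Qed.

Lemma connect_in_edge F a b x : F a b -> connect F b x ->
  exists2 u, connect F a u & F u x.
Proof.
move=> Fab /connectP[s + ->]; case/lastP: s => [|s y] /=; first by exists a.
rewrite rcons_path last_rcons => /andP[Fs Fy]; exists (last b s) => //.
by apply: connect_trans (connect1 Fab) _; apply/connectP; exists s.
Qed.

Lemma connect_out_edge F a b x : F a b -> connect F x a -> exists z, F x z.
Proof.
move=> Fab /connectP[[|y s] /= Fs def_a]; first by exists b; rewrite -def_a.
by case/andP: Fs => Fxy _; exists y.
Qed.

Lemma exists_terminal F (P : pred V) x0 :
  P x0 -> (forall x y, P x -> F x y -> P y) ->
  exists2 x, P x & forall y, connect F x y -> connect F y x.
Proof.
move=> Px0 closedP.
have reachP x y : P x -> connect F x y -> P y.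
  move=> + /connectP[s + ->]; elim: s x => //= z s IH x Px /andP[Fxz Fs].
  exact: IH (closedP x z Px Fxz) Fs.
pose reach x := [set y | connect F x y].
case: (arg_minnP (fun x => #|reach x|) Px0) => x Px x_min.
exists x => // y xy.
have sub_yx : reach y \subset reach x.
  by apply/subsetP => z; rewrite !inE; exact: connect_trans.
have /eqP eq_reach : reach y == reach x.
  by rewrite eqEcard sub_yx x_min // (reachP x y).
have : x \in reach y by rewrite eq_reach inE connect0.
by rewrite inE.
Qed.

Lemma terminal_cycle_edges F s :
    (forall y, connect F s y -> connect F y s) ->
    (forall y, connect F s y -> exists z, F y z) ->
  forall y, connect F s y ->
    (exists2 z, connect F s z & F z y) /\ (exists2 z, connect F s z & F y z).
Proof.
move=> s_term s_out y sy; have [z Fyz] := s_out y sy.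
have sz := connect_trans sy (connect1 Fyz); split; last by exists z.
have [u yu Fuy] := connect_in_edge Fyz (connect_trans (s_term z sz) sy).
by exists u => //; apply: connect_trans sy yu.
Qed.

Lemma strongly_connected_onP (P : pred V) F :
  reflect (strongly_connected_on P F) [forall u, forall v, P u ==> P v ==> connect F u v].
Proof.
apply: (iffP forallP) => [sc u v Pu Pv | sc u]; first by move/forallP/(_ v): (sc u); rewrite Pu Pv.
by apply/forallP => v; apply/implyP => Pu; apply/implyP; apply: sc.
Qed.

Lemma strongly_connected_on_dec (P : pred V) F :
  strongly_connected_on P F \/ ~ strongly_connected_on P F.
Proof. by case: (strongly_connected_onP P F); [left | right]. Qed.

Lemma not_strongly_connected_on (P : pred V) F : ~ strongly_connected_on P F ->
  exists u v, [/\ P u, P v & ~~ connect F u v].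
Proof.
move=> not_sc; have /forallPn[u /forallPn[v]] :
    ~~ [forall u, forall v, P u ==> P v ==> connect F u v].
  by apply/negP => /strongly_connected_onP.
by rewrite !negb_imply => /and3P[Pu Pv uv]; exists u, v.
Qed.

End Walks.

Section Balance.
Variables (R : realFieldType) (V : finType).
Implicit Types (e : rel V) (f g beta : V -> V -> R) (p : V -> R).

Lemma eq_beta_in e f g v : (forall u, e u v -> f u v = g u v) ->
  beta_in e f v = beta_in e g v.
Proof. by move=> fg; apply: eq_bigr => u /fg ->. Qed.

Lemma eq_beta_out e f g v : (forall z, e v z -> f v z = g v z) ->
  beta_out e f v = beta_out e g v.
Proof. by move=> fg; apply: eq_bigr => z /fg ->. Qed.

Lemma balanced_ext e f g : (forall x y, e x y -> f x y = g x y) ->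
  balanced e f -> balanced e g.
Proof.
move=> fg f_bal v; rewrite -(eq_beta_in (fun u => fg u v)).
by rewrite -(eq_beta_out (fg v)).
Qed.

Lemma balanced_out_ge e f u v : balanced e f -> e u v ->
  exists2 z, e v z & f u v <= f v z.
Proof.
move=> /(_ v) + euv; rewrite /beta_in /beta_out.
case: (bigomaxP (fun u => e u v) (fun u => f u v)) => [/(_ u)|u' _ u'_max].
  by rewrite euv.
case: (bigomaxP (fun z => e v z) (fun z => f v z)) => // z evz _ [fz].
by exists z; rewrite // -fz u'_max.
Qed.

Lemma balanced_in_ge e f v z : balanced e f -> e v z ->
  exists2 u, e u v & f v z <= f u v.
Proof.
move=> /(_ v) + evz; rewrite /beta_in /beta_out.
case: (bigomaxP (fun z => e v z) (fun z => f v z)) => [/(_ z)|z' _ z'_max].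
  by rewrite evz.
case: (bigomaxP (fun u => e u v) (fun u => f u v)) => // u euv _ [fu].
by exists u; rewrite // fu z'_max.
Qed.

Lemma balanced_shift_le e beta p (lam : R) : balanced e (shift beta p) ->
  (forall x y, e x y -> beta x y <= lam) ->
  forall x y, e x y -> shift beta p x y <= lam.
Proof.
set g := shift beta p => g_bal beta_le x y exy; rewrite leNgt; apply/negP => lam_lt.
case: (arg_maxP (fun pr : V * V => g pr.1 pr.2) (exy : (fun pr => e pr.1 pr.2) (x, y))).
move=> [a b] /= eab g_max; set m := g a b.
have lam_m : lam < m := lt_le_trans lam_lt (g_max (x, y) exy).
(* Balance continues a maximal edge into the head y0 of largest potential by another
   maximal edge y0 -> z, whose weight beta y0 z + p z - p y0 is then at most lam. *)
pose head v := [exists u, e u v && (g u v == m)].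
have head_b : head b by apply/existsP; exists a; rewrite eab eqxx.
case: (arg_maxP p head_b) => y0 /existsP[u /andP[euy /eqP gu]] y0_max.
have [z eyz m_le] := balanced_out_ge g_bal euy; rewrite gu in m_le.
have gz : g y0 z = m by apply: le_anti; rewrite m_le (g_max (y0, z) eyz).
have pz : p z <= p y0 by apply: y0_max; apply/existsP; exists y0; rewrite eyz gz eqxx.
have := beta_le _ _ eyz; move: gz; rewrite /g /shift; lra.
Qed.

Lemma thr_edge_sub e beta w : subrel (thr_edge e beta w) e.
Proof. by move=> x y /andP[]. Qed.

Lemma thr_edge_nonisolated e beta w x y : thr_edge e beta w x y ->
  nonisolated (thr_edge e beta w) x /\ nonisolated (thr_edge e beta w) y.
Proof. by move=> Txy; split; apply/existsP; [exists y | exists x]; rewrite Txy ?orbT. Qed.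

Lemma balanced_thr_edges e beta w x : balanced e beta ->
  nonisolated (thr_edge e beta w) x ->
  (exists y, thr_edge e beta w y x) /\ (exists z, thr_edge e beta w x z).
Proof.
move=> bal /existsP[u /orP[] /andP[eu wu]].
- have [z exz le_uz] := balanced_out_ge bal eu.
  by split; [exists u | exists z]; rewrite /thr_edge ?eu ?wu ?exz ?(le_trans wu le_uz).
- have [y eyx le_uy] := balanced_in_ge bal eu.
  by split; [exists y | exists u]; rewrite /thr_edge ?eu ?wu ?eyx ?(le_trans wu le_uy).
Qed.

Lemma thr_sc_of_lt e beta w : (forall x y, e x y -> beta x y < w) ->
  G_thr_strongly_connected e beta w.
Proof.
by move=> lt_w x y /existsP[u /orP[] /andP[eu wu]]; have := lt_w _ _ eu; rewrite ltNge wu.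
Qed.

Lemma connect_thr_le e beta w w' x y : w <= w' ->
  connect (thr_edge e beta w') x y -> connect (thr_edge e beta w) x y.
Proof.
move=> le_ww'; apply: connect_sub => a b /andP[eab w'b]; apply: connect1.
by rewrite /thr_edge eab (le_trans le_ww' w'b).
Qed.

End Balance.

Section Uniqueness.
Variables (R : realFieldType) (V : finType) (e : rel V) (beta gamma : V -> V -> R).
Hypotheses (beta_thr_sc : forall w, G_thr_strongly_connected e beta w)
  (gamma_bal : balanced e gamma) (beta_gamma : equivalent e beta gamma).

Variable M : R.
Hypothesis M_ge : forall x y, e x y -> gamma x y != beta x y ->
  Num.max (beta x y) (gamma x y) <= M.

Lemma diff_le_top x y : e x y -> gamma x y != beta x y ->
  beta x y <= M /\ gamma x y <= M.
Proof. by move=> exy nxy; have := M_ge exy nxy; rewrite ge_max => /andP. Qed.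

Lemma agree_at_top_beta x y : e x y -> beta x y = M -> gamma x y = beta x y.
Proof.
move=> exy bxy; apply/eqP; rewrite -subr_eq0; apply/eqP.
pose F := thr_edge e beta M.
have Fxy : F x y by rewrite /F /thr_edge exy bxy lexx.
have [Nx Ny] := thr_edge_nonisolated Fxy.
apply: (walk_le0_eq0 (f := fun a b => gamma a b - beta a b)
    (@thr_edge_sub _ _ e beta M) _ _ Fxy (beta_thr_sc Ny Nx)).
  move=> c /beta_gamma sum0; rewrite -oppr0 -sum0 /cycle_sum -sumrN.
  by apply: eq_bigr => pr _; rewrite opprB.
move=> a b /andP[eab Mb]; rewrite subr_le0.
case: (eqVneq (gamma a b) (beta a b)) => [->//|nab].
exact: le_trans (diff_le_top eab nab).2 Mb.
Qed.

Definition gamma_top x y := [&& e x y, beta x y <= gamma x y & M <= gamma x y].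

Lemma gamma_top_sub : subrel gamma_top e.
Proof. by move=> x y /and3P[]. Qed.

Lemma gamma_top_le0 x y : gamma_top x y -> beta x y - gamma x y <= 0.
Proof. by case/and3P => _ ? _; rewrite subr_le0. Qed.

Lemma gamma_top_of_ge x y : e x y -> M <= gamma x y -> gamma_top x y.
Proof.
move=> exy Mg; rewrite /gamma_top exy Mg andbT /=.
case: (eqVneq (gamma x y) (beta x y)) => [->//|nxy].
exact: le_trans (diff_le_top exy nxy).1 Mg.
Qed.

Lemma gamma_top_of_thr x y : thr_edge e beta M x y -> gamma_top x y.
Proof.
case/andP => exy Mb; apply: gamma_top_of_ge => //.
case: (eqVneq (gamma x y) (beta x y)) => [->//|nxy].
by rewrite agree_at_top_beta //; apply: le_anti; rewrite Mb (diff_le_top exy nxy).1.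
Qed.

Lemma gamma_top_out u v : gamma_top u v -> exists z, gamma_top v z.
Proof.
case/and3P=> euv _ Mg; have [z evz gz] := balanced_out_ge gamma_bal euv.
by exists z; apply: gamma_top_of_ge evz (le_trans Mg gz).
Qed.

Lemma gamma_top_in v z : gamma_top v z -> exists u, gamma_top u v.
Proof.
case/and3P=> evz _ Mg; have [u euv gu] := balanced_in_ge gamma_bal evz.
by exists u; apply: gamma_top_of_ge euv (le_trans Mg gu).
Qed.

Lemma gamma_top_cycle x y : gamma_top x y -> connect gamma_top y x ->
  thr_edge e beta M x y.
Proof.
move=> Fxy Fyx; have /eqP := walk_le0_eq0 gamma_top_sub beta_gamma gamma_top_le0 Fxy Fyx.
by rewrite subr_eq0; case/and3P: Fxy => exy _ Mg /eqP bg; rewrite /thr_edge exy bg.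
Qed.

Local Notation N := (nonisolated (thr_edge e beta M)).

Lemma gamma_top_reach_out a b : gamma_top a b ->
  exists2 u, connect gamma_top b u & N u.
Proof.
move=> Fab; have [x bx x_term] := exists_terminal (connect0 gamma_top b)
  (fun x y bx Fxy => connect_trans bx (connect1 Fxy)).
have [u _ Fux] := connect_in_edge Fab bx; have [z Fxz] := gamma_top_out Fux.
by exists x => //; case: (thr_edge_nonisolated (gamma_top_cycle Fxz (x_term z (connect1 Fxz)))).
Qed.

Lemma gamma_top_reach_in a b : gamma_top a b ->
  exists2 t, connect gamma_top t a & N t.
Proof.
move=> Fab; have [x xa x_term] := exists_terminal (F := [rel x y | gamma_top y x])
  (P := fun x => connect gamma_top x a) (connect0 gamma_top a)
  (fun x y xa Fyx => connect_trans (connect1 (e := gamma_top) Fyx) xa).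
have [z Fxz] := connect_out_edge Fab xa; have [u Fux] := gamma_top_in Fxz.
have xu : connect gamma_top x u.
  by have x_term' := x_term u; rewrite !connect_rev /= in x_term'; apply: x_term' (connect1 Fux).
by exists x => //; case: (thr_edge_nonisolated (gamma_top_cycle Fux xu)).
Qed.

Lemma agree_at_top_gamma a b : e a b -> gamma a b = M -> gamma a b = beta a b.
Proof.
move=> eab gab; apply/eqP; apply: contraT => nab.
have bab : beta a b < M.
  rewrite lt_neqAle (diff_le_top eab nab).1 andbT.
  by apply: contra nab => /eqP /(agree_at_top_beta eab) ->.
have Fab : gamma_top a b by rewrite /gamma_top eab gab lexx (ltW bab).
have [u bu Nu] := gamma_top_reach_out Fab; have [t ta Nt] := gamma_top_reach_in Fab.
have ut : connect gamma_top u t.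
  by apply: connect_sub (beta_thr_sc Nu Nt) => x y /gamma_top_of_thr; apply: connect1.
have /eqP := walk_le0_eq0 gamma_top_sub beta_gamma gamma_top_le0 Fab
  (connect_trans (connect_trans bu ut) ta).
by rewrite subr_eq0 gab (lt_eqF bab).
Qed.

End Uniqueness.

Lemma unique_balanced_of_thr_sc (R : realFieldType) (V : finType) (e : rel V)
    (beta : V -> V -> R) :
  (forall w, G_thr_strongly_connected e beta w) -> unique_balanced_in_class e beta.
Proof.
move=> thr_sc gamma gamma_bal beta_gamma u v euv; apply/eqP; apply: contraT => nuv.
pose mx pr := Num.max (beta pr.1 pr.2) (gamma pr.1 pr.2).
pose D pr := e pr.1 pr.2 && (gamma pr.1 pr.2 != beta pr.1 pr.2).
have Duv : D (u, v) by rewrite /D /= euv.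
case: (@arg_maxP _ _ _ _ D mx Duv) => -[a b] /andP[/= eab nab] ab_max.
have M_ge x y : e x y -> gamma x y != beta x y -> mx (x, y) <= mx (a, b).
  by move=> exy nxy; apply: (ab_max (x, y)); rewrite /D /= exy.
have agree := agree_at_top_gamma thr_sc gamma_bal beta_gamma M_ge eab.
have agree' := agree_at_top_beta thr_sc beta_gamma M_ge eab.
move: nab; rewrite /mx /= in agree agree'.
case: (leP (beta a b) (gamma a b)) => [bg|gb] in agree agree' *.
- by rewrite agree ?eqxx // max_r.
- by rewrite agree' ?eqxx // max_l // ltW.
Qed.

Definition critical_set (R : realFieldType) (V : finType) (e : rel V)
    (beta : V -> V -> R) (lam : R) (C : {set V}) : Prop :=
  forall x, x \in C ->
    (exists2 y, y \in C & e y x /\ beta y x = lam) /\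
    (exists2 y, y \in C & e x y /\ beta x y = lam).

Lemma critical_setU (R : realFieldType) (V : finType) (e : rel V) (beta : V -> V -> R)
    lam (C1 C2 : {set V}) :
  critical_set e beta lam C1 -> critical_set e beta lam C2 ->
  critical_set e beta lam (C1 :|: C2).
Proof.
move=> crit1 crit2 x; rewrite inE => /orP[/crit1|/crit2] [[y yC Hy] [z zC Hz]];
  by split; [exists y | exists z]; rewrite // inE ?yC ?zC ?orbT.
Qed.

Lemma critical_set_shift (R : realFieldType) (V : finType) (e : rel V)
    (beta : V -> V -> R) lam (C : {set V}) (p : V -> R) :
  {in C &, forall x y, p x = p y} -> critical_set e beta lam C ->
  critical_set e (shift beta p) lam C.
Proof.
move=> p_const crit x xC; have [[y yC [eyx byx]] [z zC [exz bxz]]] := crit x xC.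
split; [exists y | exists z]; rewrite // /shift.
  by rewrite (p_const y x yC xC) byx addrK.
by rewrite (p_const z x zC xC) bxz addrK.
Qed.

Section Contraction.
Variables (V : finType) (C : {set V}) (c0 : V).
Hypothesis c0C : c0 \in C.

Definition contracted : finType := {x : V | (x \notin C) || (x == c0)}.

Definition contracted_pt : contracted := exist _ c0 (introT orP (or_intror (eqxx c0))).

Definition contract (x : V) : contracted := insubd contracted_pt x.

Lemma val_contract_in x : x \in C -> val (contract x) = c0.
Proof. by move=> xC; rewrite val_insubd xC /=; case: eqP. Qed.

Lemma val_contract_notin x : x \notin C -> val (contract x) = x.
Proof. by move=> xC; rewrite val_insubd xC. Qed.

Lemma contract_in x : x \in C -> contract x = contracted_pt.
Proof. by move=> xC; apply: val_inj; rewrite val_contract_in. Qed.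

Lemma contractK : cancel val contract.
Proof. exact: valKd. Qed.

Lemma val_in_contracted (X : contracted) : val X \in C -> X = contracted_pt.
Proof. by move=> XC; apply: val_inj; move: (valP X); rewrite XC => /eqP. Qed.

Lemma contract_eq x y : contract x = contract y -> x = y \/ x \in C /\ y \in C.
Proof.
have val_c0 z : z \notin C -> val (contract z) != c0.
  by move=> zC; rewrite val_contract_notin //; apply: contraNneq zC => ->.
case xC: (x \in C); case yC: (y \in C) => xy; try by right.
- by move: (val_c0 y (negbT yC)); rewrite -xy val_contract_in ?eqxx.
- by move: (val_c0 x (negbT xC)); rewrite xy val_contract_in ?eqxx.
- by left; rewrite -[x]val_contract_notin ?xC // xy val_contract_notin ?yC.
Qed.

Lemma card_contracted c1 : c1 \in C -> c1 != c0 -> (#|contracted| < #|V|)%N.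
Proof.
move=> c1C c1c0; rewrite card_sig; apply: (@leq_ltn_trans #|predC1 c1|); last first.
  by rewrite cardC1 ltn_predL; apply/card_gt0P; exists c1.
apply: subset_leq_card; apply/subsetP => x; rewrite !inE.
case/orP => [xC|/eqP->]; last by rewrite eq_sym c1c0.
by apply: contraNneq xC => ->.
Qed.

Section Edges.
Variable e : rel V.

Definition fiber_edge (X Y : contracted) (pr : V * V) : bool :=
  [&& contract pr.1 == X, contract pr.2 == Y & e pr.1 pr.2].

Definition contract_rel : rel contracted := fun X Y => [exists pr, fiber_edge X Y pr].

(* The value 0 between fibers without edges is never used. *)
Definition contract_fun (R : realFieldType) (beta : V -> V -> R) X Y : R :=
  odflt 0 (\big[@omax R/None]_(pr | fiber_edge X Y pr) Some (beta pr.1 pr.2)).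

Lemma contract_rel_contract x y : e x y -> contract_rel (contract x) (contract y).
Proof. by move=> exy; apply/existsP; exists (x, y); rewrite /fiber_edge !eqxx exy. Qed.

Lemma connect_contract x y : connect e x y -> connect contract_rel (contract x) (contract y).
Proof.
move=> /connectP[s + ->]; elim: s x => [|z s IH] x //= /andP[exz es].
exact: connect_trans (connect1 (contract_rel_contract exz)) (IH _ es).
Qed.

Lemma strongly_connected_contract : strongly_connected e -> strongly_connected contract_rel.
Proof.
move=> e_sc X Y _ _; rewrite -(contractK X) -(contractK Y).
exact: connect_contract (e_sc _ _ isT isT).
Qed.

Variable R : realFieldType.
Implicit Types (beta : V -> V -> R) (p : contracted -> R).

Lemma contract_fun_ge beta x y : e x y ->
  beta x y <= contract_fun beta (contract x) (contract y).
Proof.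
move=> exy; rewrite /contract_fun.
case: bigomaxP => [/(_ (x, y))|pr _ pr_max]; first by rewrite /fiber_edge !eqxx exy.
by apply: (pr_max (x, y)); rewrite /fiber_edge !eqxx exy.
Qed.

Lemma contract_funP beta X Y : contract_rel X Y ->
  exists x y, [/\ contract x = X, contract y = Y, e x y & beta x y = contract_fun beta X Y].
Proof.
move=> /existsP[pr0 fib0]; rewrite /contract_fun.
case: bigomaxP => [/(_ pr0)|[x y] /and3P[/eqP xX /eqP yY exy] _]; first by rewrite fib0.
by exists x, y.
Qed.

Lemma contract_fun_shift beta p X Y : contract_rel X Y ->
  contract_fun (shift beta (fun v => p (contract v))) X Y = shift (contract_fun beta) p X Y.
Proof.
move=> /(contract_funP beta)[x [y [xX yY exy bxy]]].
rewrite {1}/contract_fun (@bigomax_some _ _ _ _ (x, y) (shift (contract_fun beta) p X Y)) //.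
- by rewrite /fiber_edge xX yY !eqxx exy.
- by rewrite /shift /= xX yY bxy.
move=> [x' y'] /and3P[/eqP x'X /eqP y'Y ex'y']; rewrite /shift /= x'X y'Y.
by rewrite !lerD2r -x'X -y'Y contract_fun_ge.
Qed.

End Edges.
End Contraction.

Arguments contract_rel {V} C c0 e.
Arguments contract_fun {V} C c0 e {R} beta.

Section ContractBalance.
Variables (R : realFieldType) (V : finType) (C : {set V}) (c0 : V).
Hypothesis c0C : c0 \in C.
Variables (e : rel V) (lam : R).
Implicit Types (beta : V -> V -> R).
Local Notation ec := (@contract_rel V C c0 e).
Local Notation cf := (@contract_fun V C c0 e R).
Local Notation pi := (contract C c0).

Lemma contract_fun_le beta : (forall x y, e x y -> beta x y <= lam) ->
  forall X Y, ec X Y -> cf beta X Y <= lam.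
Proof. by move=> beta_le X Y /(contract_funP beta)[x [y [_ _ exy <-]]]; apply: beta_le. Qed.

Lemma balanced_contract beta : (forall x y, e x y -> beta x y <= lam) ->
  critical_set e beta lam C -> balanced e beta <-> balanced ec (cf beta).
Proof.
move=> beta_le crit.
have top_C v : v \in C -> beta_in e beta v = Some lam /\ beta_out e beta v = Some lam.
  move=> vC; have [[y _ [eyv byv]] [z _ [evz bvz]]] := crit v vC.
  by split; [apply: (bigomax_some eyv byv) | apply: (bigomax_some evz bvz)] => u;
    apply: beta_le.
have top_c0 : beta_in ec (cf beta) (contracted_pt C c0) = Some lam /\
              beta_out ec (cf beta) (contracted_pt C c0) = Some lam.
  have [[y yC [eyc0 byc0]] _] := crit c0 c0C.
  have ec00 := contract_rel_contract C c0 eyc0.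
  rewrite !contract_in // in ec00.
  have cf00 : cf beta (contracted_pt C c0) (contracted_pt C c0) = lam.
    apply: le_anti; rewrite contract_fun_le //= -byc0.
    by rewrite -{1}(contract_in c0 yC) -(contract_in c0 c0C) contract_fun_ge.
  split; [apply: (@bigomax_some _ _ (ec^~ _) (cf beta ^~ _) _ _ ec00 cf00)
         | apply: (@bigomax_some _ _ (ec _) (cf beta _) _ _ ec00 cf00)];
    by move=> X; apply: contract_fun_le.
have off_C v : v \notin C -> beta_in e beta v = beta_in ec (cf beta) (pi v) /\
                            beta_out e beta v = beta_out ec (cf beta) (pi v).
  move=> vC; split; apply: eq_bigomax => [u euv|U].
  - by exists (pi u); [apply: contract_rel_contract | apply: contract_fun_ge].
  - case/(contract_funP beta)=> x [y [xU yv exy bxy]].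
    have [y_v|[_ vC']] := contract_eq c0C yv; last by rewrite vC' in vC.
    by subst y; exists x; rewrite // bxy.
  - by exists (pi u); [apply: contract_rel_contract | apply: contract_fun_ge].
  - case/(contract_funP beta)=> x [y [xv yU exy bxy]].
    have [x_v|[_ vC']] := contract_eq c0C xv; last by rewrite vC' in vC.
    by subst x; exists y; rewrite // bxy.
split=> bal v.
- case: (boolP (val v \in C)) => [/val_in_contracted -> | vC].
    by case: top_c0 => -> ->.
  by rewrite -(contractK v); case: (off_C _ vC) => <- <-.
- case: (boolP (v \in C)) => [/top_C | /off_C] [-> ->] //.
Qed.

Lemma balanced_shift_uncontract beta (p : contracted C c0 -> R) :
    (forall x y, e x y -> beta x y <= lam) -> critical_set e beta lam C ->
  balanced ec (shift (cf beta) p) -> balanced e (shift beta (fun v => p (pi v))).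
Proof.
move=> beta_le crit bal_c.
have cf_le := balanced_shift_le bal_c (contract_fun_le beta_le).
set beta' := shift beta _.
have beta'_le x y : e x y -> beta' x y <= lam.
  move=> exy; apply: le_trans (cf_le _ _ (contract_rel_contract C c0 exy)).
  by rewrite /beta' /shift !lerD2r contract_fun_ge.
have crit' : critical_set e beta' lam C.
  by apply: critical_set_shift crit => x y xC yC; rewrite !contract_in.
apply/(balanced_contract beta'_le crit').
by apply: balanced_ext bal_c => X Y eXY; rewrite contract_fun_shift.
Qed.

Lemma thr_sc_uncontract beta w :
    (forall x y, x \in C -> y \in C -> connect (thr_edge e beta w) x y) ->
  G_thr_strongly_connected ec (cf beta) w -> G_thr_strongly_connected e beta w.
Proof.
move=> C_conn sc_c a b Na Nb; set T := thr_edge e beta w.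
have fiber_conn x y : pi x = pi y -> connect T x y.
  by case/(contract_eq c0C) => [-> | [xC yC]]; [apply: connect0 | apply: C_conn].
have lift X Y : connect (thr_edge ec (cf beta) w) X Y ->
    forall x y, pi x = X -> pi y = Y -> connect T x y.
  move=> /connectP[s + ->]; elim: s X => [|Z s IH] X /= => [_|/andP[/andP[eXZ wZ] sZ]] x y xX yY.
    by apply: fiber_conn; rewrite xX.
  have [x' [z [x'X zZ ex'z bx'z]]] := contract_funP beta eXZ.
  apply: connect_trans (fiber_conn x x' _) _; first by rewrite xX x'X.
  apply: connect_trans (connect1 (_ : T x' z)) (IH _ sZ z y zZ yY).
  by rewrite /T /thr_edge ex'z bx'z.
have N_pi x : nonisolated T x -> nonisolated (thr_edge ec (cf beta) w) (pi x).
  case/existsP=> u /orP[] /andP[eu wu]; apply/existsP; exists (pi u); apply/orP;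
    [left | right]; rewrite /thr_edge contract_rel_contract //=;
    exact: le_trans wu (contract_fun_ge C c0 beta eu).
exact: lift (sc_c _ _ (N_pi _ Na) (N_pi _ Nb)) _ _ erefl erefl.
Qed.

End ContractBalance.

Section MaxCycleMean.
Variables (R : realFieldType) (V : finType).
Implicit Types (e : rel V) (f beta : V -> V -> R).

Fixpoint seqs_upto n : seq (seq V) :=
  if n is n'.+1 then [::] :: [seq x :: s | x <- enum V, s <- seqs_upto n']
  else [:: [::]].

Lemma mem_seqs_upto n s : (s \in seqs_upto n) = (size s <= n)%N.
Proof.
elim: n s => [|n IH] [|x s] //=; rewrite inE /= ltnS -IH.
apply/allpairsP/idP => [[[y t] /= [_ t_in [_ ->]]] // | s_in].
by exists (x, s); rewrite mem_enum.
Qed.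

Lemma long_seq_split (s : seq V) : (#|V| < size s)%N ->
  exists a y b c, s = a ++ y :: b ++ y :: c.
Proof.
move=> long; have : ~~ uniq s.
  by apply: contraL long => /card_uniqP <-; rewrite -leqNgt max_card.
elim: s {long} => [//|z s IH] /=; rewrite negb_and negbK => /orP[zs|/IH[a [y [b [c ->]]]]].
  by case/splitPr: zs => b c; exists [::], z, b, c.
by exists (z :: a), y, b, c.
Qed.

Lemma path_sum_cut f x y a b c : path_sum f x (a ++ y :: b ++ y :: c) =
  path_sum f x (a ++ y :: c) + path_sum f y (rcons b y).
Proof. by rewrite path_sum_rcons !path_sum_cat /= !path_sum_cat /=; ring. Qed.

Lemma path_cut e x y a b c : path e x (a ++ y :: b ++ y :: c) =
  path e x (a ++ y :: c) && path e y (rcons b y).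
Proof.
rewrite !cat_path /= cat_path rcons_path /=.
by case: (path e x a) (e _ y) (path e y b) (e _ y) (path e y c) => [] [] [] [] [].
Qed.

Lemma last_cut (x y : V) a b c : last x (a ++ y :: b ++ y :: c) = last x (a ++ y :: c).
Proof. by rewrite !last_cat /= last_cat. Qed.

Definition closed_walk e x s := [&& path e x s, last x s == x & (0 < size s)%N].

Definition walk_mean beta (pr : V * seq V) : R := path_sum beta pr.1 pr.2 / (size pr.2)%:R.

Definition short_walks e : seq (V * seq V) :=
  [seq pr <- [seq (x, s) | x <- enum V, s <- seqs_upto #|V|] | path e pr.1 pr.2].

Lemma short_walksP e x s :
  reflect (path e x s /\ (size s <= #|V|)%N) ((x, s) \in short_walks e).
Proof.
rewrite mem_filter /=; apply: (iffP andP) => [[-> /allpairsP[[y t] /= [_]]]|[-> s_short]].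
  by rewrite mem_seqs_upto => + [_ ->].
by split=> //; apply/allpairsP; exists (x, s); rewrite mem_enum mem_seqs_upto.
Qed.

Lemma path_sum_eq0_path (F : rel V) f x s : path F x s ->
  (forall a b, F a b -> f a b <= 0) -> path_sum f x s = 0 ->
  path [rel a b | F a b && (f a b == 0)] x s.
Proof.
move=> + f_le0; elim: s x => [//|y s IH] x /= /andP[Fxy Fs] sum0.
have fxy_le0 := f_le0 _ _ Fxy; have sum_le0 := path_sum_le0 Fs f_le0.
have fxy0 : f x y = 0 by lra.
by rewrite Fxy fxy0 eqxx IH // -sum0 fxy0 add0r.
Qed.

Lemma exists_seq_max (T : eqType) (r : seq T) (F : T -> R) x0 : x0 \in r ->
  exists2 x, x \in r & forall y, y \in r -> F y <= F x.
Proof.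
elim: r x0 => [//|a [|b r] IH] x0 _.
  by exists a; rewrite ?mem_head // => y; rewrite inE => /eqP->.
have [x xr x_max] := IH b (mem_head b r).
have [Fax|Fxa] := leP (F a) (F x).
  by exists x => [|y /predU1P[->|/x_max]]; rewrite // inE xr orbT.
exists a; rewrite ?mem_head // => y /predU1P[->//|/x_max Fyx].
exact: le_trans Fyx (ltW Fxa).
Qed.

Lemma critical_set_cycle e f lam x s :
  path [rel a b | e a b && (f a b == lam)] x (rcons s x) ->
  critical_set e f lam [set y | y \in x :: s].
Proof.
move=> cyc y; rewrite in_set => ys; rewrite -/(cycle _ (x :: s)) in cyc.
have /andP[e1 /eqP f1] := prev_cycle cyc ys.
have /andP[e2 /eqP f2] := next_cycle cyc ys.
by split; [exists (prev (x :: s) y) | exists (next (x :: s) y)];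
  rewrite ?in_set ?mem_prev ?mem_next.
Qed.

Section Potential.
Variables (e : rel V) (beta : V -> V -> R) (lam : R).
Hypothesis mean_le : forall x s, closed_walk e x s -> (size s <= #|V|)%N ->
  path_sum beta x s <= lam * (size s)%:R.
Local Notation excess := (fun a b => beta a b - lam).

Lemma closed_walk_excess_le0 x s : closed_walk e x s -> path_sum excess x s <= 0.
Proof.
have [k] := ubnP (size s); elim: k x s => // k IH x s lt_sk walk_s.
case: (leqP (size s) #|V|) => [short|/long_seq_split[a [y [b [c def_s]]]]].
  by rewrite path_sum_subr subr_le0 mean_le.
move: walk_s lt_sk; rewrite def_s /closed_walk path_cut last_cut path_sum_cut.
case/and3P=> /andP[pa pb] xx _ lt_sk; rewrite -[0]addr0 lerD // IH //.
- by move: lt_sk; rewrite !size_cat /= !size_cat /=; lia.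
- by rewrite /closed_walk pa xx size_cat addnS.
- by move: lt_sk; rewrite size_rcons !size_cat /= !size_cat /=; lia.
- by rewrite /closed_walk pb last_rcons eqxx size_rcons.
Qed.

Definition potential v : R :=
  \big[Num.max/0]_(pr <- short_walks e | last pr.1 pr.2 == v) path_sum excess pr.1 pr.2.

Lemma path_sum_le_potential x s : path e x s -> path_sum excess x s <= potential (last x s).
Proof.
have [k] := ubnP (size s); elim: k x s => // k IH x s lt_sk path_s.
case: (leqP (size s) #|V|) => [short|/long_seq_split[a [y [b [c def_s]]]]].
  by rewrite /potential; apply: (@le_bigmax_seq _ _ _ _ _ (x, s)) => //=; apply/short_walksP.
move: path_s lt_sk; rewrite def_s path_cut last_cut path_sum_cut => /andP[pa pb] lt_sk.
have cyc_le0 : path_sum excess y (rcons b y) <= 0.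
  by apply: closed_walk_excess_le0; rewrite /closed_walk pb last_rcons eqxx size_rcons.
apply: le_trans (IH _ _ _ pa); first by rewrite gerDl.
by move: lt_sk; rewrite !size_cat /= !size_cat /=; lia.
Qed.

Lemma potential_edge a b : e a b -> potential a + excess a b <= potential b.
Proof.
move=> eab; rewrite -lerBrDr [X in X <= _]/potential big_seq_cond.
apply: bigmax_le => [|[x s] /andP[/short_walksP[xs _] /eqP /= sa]].
  rewrite subr_ge0; have := path_sum_le_potential (x := a) (s := [:: b]).
  by rewrite /= eab addr0; apply.
rewrite lerBrDr; have := path_sum_le_potential (x := x) (s := rcons s b).
by rewrite rcons_path xs sa eab last_rcons path_sum_rcons sa; apply.
Qed.

End Potential.

Lemma exists_critical_shift e beta x y : strongly_connected e -> e x y ->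
  exists lam (q : V -> R) (C : {set V}) z, [/\ z \in C,
    forall a b, e a b -> shift beta q a b <= lam & critical_set e (shift beta q) lam C].
Proof.
move=> e_sc exy; pose walks := [seq pr <- short_walks e | closed_walk e pr.1 pr.2].
have walksP z s : closed_walk e z s -> (size s <= #|V|)%N -> (z, s) \in walks.
  by move=> zs s_short; rewrite mem_filter zs; apply/short_walksP; case/and3P: zs.
have [t] := connectP (e_sc y x isT isT); case/shortenP => t' yt' uniq_t' _ xt.
have walk0 : (x, y :: t') \in walks.
  apply: walksP; first by rewrite /closed_walk /= exy yt' -xt eqxx.
  by rewrite -(card_uniqP uniq_t') max_card.
have [[x0 s0] /=] := exists_seq_max (walk_mean beta) walk0.
rewrite mem_filter /= => /andP[/and3P[ps0 /eqP ls0 size_s0] _].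
case/lastP: s0 ps0 ls0 size_s0 => // s1 x1 ps0; rewrite last_rcons => x1x0 _ s0_max.
subst x1.
(* lam is the maximal cycle mean, attained by the closed walk x0 :: s1. *)
set lam := walk_mean beta (x0, rcons s1 x0).
have mean_le z s : closed_walk e z s -> (size s <= #|V|)%N ->
    path_sum beta z s <= lam * (size s)%:R.
  move=> zs s_short; have /and3P[_ _ s_pos] := zs.
  by rewrite -ler_pdivrMr ?ltr0n //; apply: (s0_max (z, s)); apply: walksP.
set q := fun v => - potential e beta lam v.
have q_le a b : e a b -> shift beta q a b <= lam.
  by move=> /(potential_edge mean_le); rewrite /shift /q; lra.
exists lam, q, [set v | v \in x0 :: s1], x0; split=> //; first by rewrite in_set mem_head.
apply: critical_set_cycle; apply: sub_path
  (path_sum_eq0_path (f := fun a b => shift beta q a b - lam) ps0 _ _).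
- by move=> a b /= /andP[-> /=]; rewrite subr_eq0.
- by move=> a b /q_le; rewrite subr_le0.
rewrite path_sum_subr path_sum_shift last_rcons addrK /lam /walk_mean /= divfK ?subrr //.
by rewrite pnatr_eq0 size_rcons.
Qed.

End MaxCycleMean.

Section Loops.
Variables (R : realFieldType) (V : finType).
Implicit Types (e : rel V) (f : V -> V -> R).

Definition nedges e := #|[set pr : V * V | e pr.1 pr.2]|.

Definition loop_at (x0 x y : V) : bool := (x == x0) && (y == x0).

Definition noloop e x0 : rel V := fun a b => e a b && ~~ loop_at x0 a b.

Lemma noloop_sc e x0 : strongly_connected e -> strongly_connected (noloop e x0).
Proof.
move=> e_sc u v _ _; have [s es ->] := connectP (e_sc u v isT isT).
case: (shortenP es) => s' es' uniq_s' _; apply/connectP; exists s' => //.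
elim: s' u es' uniq_s' {es} => [//|y t IH] u /= /andP[euy yt] /andP[u_notin uniq_t].
rewrite /noloop /loop_at euy IH //= andbT; apply: contra u_notin => /andP[/eqP-> /eqP->].
exact: mem_head.
Qed.

Lemma noloop_card e x0 : e x0 x0 -> (nedges (noloop e x0) < nedges e)%N.
Proof.
move=> ex0; apply: proper_card; apply/properP; split.
  by apply/subsetP => pr; rewrite !inE => /andP[].
by exists (x0, x0); rewrite !inE /noloop /loop_at /= ?ex0 // eqxx.
Qed.

Lemma beta_in_noloop e f x0 v : v != x0 -> beta_in (noloop e x0) f v = beta_in e f v.
Proof. by move=> vx0; apply: eq_bigl => u; rewrite /noloop /loop_at (negbTE vx0) andbF andbT. Qed.

Lemma beta_out_noloop e f x0 v : v != x0 -> beta_out (noloop e x0) f v = beta_out e f v.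
Proof. by move=> vx0; apply: eq_bigl => z; rewrite /noloop /loop_at (negbTE vx0) andbT. Qed.

Lemma balanced_dominant_loop e f x0 (lam : R) : e x0 x0 -> f x0 x0 = lam ->
  (forall a b, e a b -> f a b <= lam) ->
  (forall v, v != x0 -> beta_in e f v = beta_out e f v) -> balanced e f.
Proof.
move=> ex0 fx0 f_le bal v; case: (eqVneq v x0) => [->|]; last exact: bal.
rewrite /beta_in /beta_out (bigomax_some (P := e^~ x0) (F := f^~ x0) ex0 fx0).
  by rewrite (bigomax_some (P := e x0) (F := f x0) ex0 fx0) // => z /f_le.
by move=> u /f_le.
Qed.

Lemma balanced_change_loop e f g x0 (lam : R) : e x0 x0 -> g x0 x0 = lam ->
  (forall a b, e a b -> g a b <= lam) ->
  (forall a b, ~~ loop_at x0 a b -> f a b = g a b) ->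
  balanced e f -> balanced e g.
Proof.
move=> ex0 gx0 g_le fg f_bal; apply: (balanced_dominant_loop ex0 gx0 g_le) => v vx0.
have in_fg : beta_in e f v = beta_in e g v.
  by apply: eq_beta_in => u _; apply: fg; rewrite /loop_at (negbTE vx0) andbF.
have out_fg : beta_out e f v = beta_out e g v.
  by apply: eq_beta_out => z _; apply: fg; rewrite /loop_at (negbTE vx0).
by rewrite -in_fg -out_fg f_bal.
Qed.

End Loops.

Lemma lex_card_ind (R : realFieldType)
    (P : forall V : finType, rel V -> (V -> V -> R) -> Prop)
    (m : forall V : finType, rel V -> (V -> V -> R) -> nat) :
  (forall (V : finType) (e : rel V) (beta : V -> V -> R),
     (forall (V' : finType) (e' : rel V') (beta' : V' -> V' -> R),
        (#|V'| < #|V|)%N -> P V' e' beta') ->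
     (forall e' beta', (m V e' beta' < m V e beta)%N -> P V e' beta') ->
     P V e beta) ->
  forall (V : finType) (e : rel V) (beta : V -> V -> R), P V e beta.
Proof.
move=> step V; have [n] := ubnP #|V|; elim: n V => // n IHn V ltVn e beta.
have [k] := ubnP (m V e beta); elim: k e beta => // k IHk e beta ltk.
apply: step => [V' e' beta' ltV' | e' beta' lt_m].
- exact: IHn (leq_trans ltV' ltVn) e' beta'.
- exact: IHk (leq_trans lt_m ltk).
Qed.

Section ExistsBalanced.
Variable R : realFieldType.

Lemma balanced_shift_step (V : finType) (e : rel V) (beta : V -> V -> R) :
  (forall (V' : finType) (e' : rel V') (beta' : V' -> V' -> R), (#|V'| < #|V|)%N ->
     strongly_connected e' -> exists p, balanced e' (shift beta' p)) ->
  (forall (e' : rel V) (beta' : V -> V -> R), (nedges e' < nedges e)%N ->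
     strongly_connected e' -> exists p, balanced e' (shift beta' p)) ->
  strongly_connected e -> exists p, balanced e (shift beta p).
Proof.
move=> IHV IHE e_sc.
case: (pickP [pred pr : V * V | e pr.1 pr.2]) => [[x y] /= exy | no_edge]; last first.
  exists (fun _ => 0) => v; rewrite /beta_in /beta_out !bigomax_none // => u;
    apply/negbT; [exact: no_edge (v, u) | exact: no_edge (u, v)].
have [lam [q [C [x0 [x0C bq_le crit]]]]] := exists_critical_shift beta e_sc exy.
set bq := shift beta q in bq_le crit.
suff [p bal] : exists p, balanced e (shift bq p).
  by exists (fun v => q v + p v); apply: balanced_ext bal => a b _; rewrite shiftD.
case: (pickP [pred c | (c \in C) && (c != x0)]) => [c1 /andP[c1C c1x0] | single].
  have [p' bal'] := IHV _ _ (contract_fun C x0 e bq) (card_contracted c1C c1x0)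
    (strongly_connected_contract (C := C) (c0 := x0) e_sc).
  exists (fun v => p' (contract C x0 v)).
  exact: (balanced_shift_uncontract x0C bq_le crit bal').
have [[z zC [ezx0 bzx0]] _] := crit x0 x0C.
have z_x0 : z = x0 by apply/eqP; move: (single z); rewrite /= zC => /negbFE.
rewrite {}z_x0 in ezx0 bzx0.
have [p bal] := IHE _ bq (noloop_card ezx0) (noloop_sc x0 e_sc).
exists p; apply: (balanced_dominant_loop ezx0 (lam := lam)).
- by rewrite /shift bzx0 addrK.
- move=> a b eab; case: (boolP (loop_at x0 a b)) => [/andP[/eqP-> /eqP->]|nab].
    by rewrite /shift bzx0 addrK.
  by apply: (balanced_shift_le bal) => [u w /andP[/bq_le]|]; rewrite // /noloop eab.
- by move=> v vx0; rewrite -(beta_in_noloop _ _ vx0) -(beta_out_noloop _ _ vx0).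
Qed.

Theorem exists_balanced_shift (V : finType) (e : rel V) (beta : V -> V -> R) :
  strongly_connected e -> exists p, balanced e (shift beta p).
Proof.
move: V e beta; apply: (lex_card_ind (m := fun V e _ => nedges e)) => V e beta.
exact: balanced_shift_step.
Qed.

End ExistsBalanced.

Definition nontrivial_balanced_shift (R : realFieldType) (V : finType) (e : rel V)
    (beta : V -> V -> R) : Prop :=
  exists p : V -> R, balanced e (shift beta p) /\ exists x y, e x y /\ p x != p y.

Lemma exists_pos_gap (R : realFieldType) (I : finType) (P : pred I) (F : I -> R) (L : R) :
  (forall i, P i -> F i < L) -> exists2 d, 0 < d & forall i, P i -> F i + d <= L.
Proof.
move=> F_lt; case: (pickP P) => [i0 Pi0 | noP]; last by exists 1 => // i; rewrite noP.
case: (arg_maxP F Pi0) => i Pi i_max; exists (L - F i); first by rewrite subr_gt0 F_lt.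
by move=> j Pj; have Fji : F j <= F i := i_max j Pj; lra.
Qed.

Section EdgeValues.
Variables (R : realFieldType) (V : finType).
Implicit Types (e : rel V) (f g : V -> V -> R).

Definition edge_values e f : seq R :=
  undup [seq f pr.1 pr.2 | pr in [pred pr : V * V | e pr.1 pr.2]].

Lemma edge_valuesP e f r :
  reflect (exists x y, e x y /\ f x y = r) (r \in edge_values e f).
Proof.
rewrite mem_undup; apply: (iffP imageP) => [[[x y] exy ->]|[x [y [exy <-]]]].
  by exists x, y.
by exists (x, y).
Qed.

Lemma size_edge_values_lt e f g r : {subset edge_values e f <= edge_values e g} ->
  r \in edge_values e g -> r \notin edge_values e f ->
  (size (edge_values e f) < size (edge_values e g))%N.
Proof.
move=> sub_fg rg rf; rewrite -/(size (r :: _)).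
by apply: uniq_leq_size => [|x /predU1P[->|/sub_fg]]; rewrite //= rf undup_uniq.
Qed.

End EdgeValues.

Section LowerLoop.
Variables (R : realFieldType) (V : finType) (e : rel V) (beta : V -> V -> R).
Variables (a : V) (L2 : R).
Hypotheses (ea : e a a) (L2_lt : L2 < beta a a)
  (L2_max : forall x y, e x y -> ~~ loop_at a x y -> beta x y <= L2).

Definition lower_loop x y : R := if loop_at a x y then L2 else beta x y.

Lemma lower_loop_off x y : ~~ loop_at a x y -> beta x y = lower_loop x y.
Proof. by rewrite /lower_loop => /negbTE ->. Qed.

Lemma lower_loop_le x y : e x y -> lower_loop x y <= L2.
Proof. by rewrite /lower_loop; case: ifP => [_ _ | /negbT off /L2_max]; [apply: lexx | apply]. Qed.

Lemma balanced_lower_loop : balanced e beta -> balanced e lower_loop.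
Proof.
apply: (balanced_change_loop ea _ lower_loop_le lower_loop_off).
by rewrite /lower_loop /loop_at eqxx.
Qed.

Lemma thr_edge_lower_loop w : w <= L2 -> thr_edge e lower_loop w =2 thr_edge e beta w.
Proof.
move=> wL2 x y; rewrite /thr_edge /lower_loop; case: ifP => // /andP[/eqP-> /eqP->].
by rewrite ea wL2 (le_trans wL2 (ltW L2_lt)).
Qed.

Lemma thr_sc_lower_loop w : w <= L2 ->
  G_thr_strongly_connected e lower_loop w -> G_thr_strongly_connected e beta w.
Proof.
move=> wL2 sc x y Nx Ny; have thr_eq := thr_edge_lower_loop wL2.
have N_lower t : nonisolated (thr_edge e beta w) t -> nonisolated (thr_edge e lower_loop w) t.
  by case/existsP=> r Tr; apply/existsP; exists r; rewrite !thr_eq.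
by rewrite -(eq_connect thr_eq); apply: sc; apply: N_lower.
Qed.

Lemma size_edge_values_lower_loop x y : e x y -> ~~ loop_at a x y -> beta x y = L2 ->
  (size (edge_values e lower_loop) < size (edge_values e beta))%N.
Proof.
move=> exy off bxy; apply: (size_edge_values_lt (r := beta a a)).
- move=> r /edge_valuesP[x' [y' [exy' <-]]]; apply/edge_valuesP.
  by rewrite /lower_loop; case: ifP => _; [exists x, y | exists x', y'].
- by apply/edge_valuesP; exists a, a.
- apply/edge_valuesP => -[x' [y' [exy' low_eq]]].
  by have := lower_loop_le exy'; rewrite low_eq leNgt L2_lt.
Qed.

Lemma balanced_raise_loop p : balanced e (shift lower_loop p) -> balanced e (shift beta p).
Proof.
move=> low_bal; apply: (balanced_change_loop ea _ _ _ low_bal) => [|x y exy|x y off].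
- by rewrite /shift addrK.
- case: (boolP (loop_at a x y)) => [/andP[/eqP-> /eqP->]|off]; first by rewrite /shift addrK.
  rewrite /shift (lower_loop_off off); apply: le_trans (ltW L2_lt).
  exact: (balanced_shift_le low_bal lower_loop_le exy).
- by rewrite /shift lower_loop_off.
Qed.

End LowerLoop.

Section TopLevel.
Variables (R : realFieldType) (V : finType) (e : rel V) (beta : V -> V -> R) (L : R).
Hypotheses (e_sc : strongly_connected e) (beta_bal : balanced e beta)
  (L_max : forall x y, e x y -> beta x y <= L).
Local Notation T := (thr_edge e beta L).
Local Notation N := (nonisolated (thr_edge e beta L)).

Lemma top_edge x y : T x y -> e x y /\ beta x y = L.
Proof. by case/andP=> exy Lb; split=> //; apply: le_anti; rewrite Lb L_max. Qed.

Lemma top_critical_edges (C : {set V}) :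
    (forall x, x \in C -> (exists2 y, y \in C & T y x) /\ (exists2 y, y \in C & T x y)) ->
  critical_set e beta L C.
Proof.
move=> C_edges x /C_edges[[y yC /top_edge Tyx] [z zC /top_edge Txz]].
by split; [exists y | exists z].
Qed.

Lemma top_critical : critical_set e beta L [set x | N x].
Proof.
apply: top_critical_edges => x; rewrite inE => /(balanced_thr_edges beta_bal)[[y Tyx] [z Txz]].
by split; [exists y | exists z]; rewrite // inE;
  [case: (thr_edge_nonisolated Tyx) | case: (thr_edge_nonisolated Txz)].
Qed.

Lemma nontrivial_of_critical_pair (K S : {set V}) k s :
    k \in K -> s \in S -> [disjoint K & S] ->
    critical_set e beta L K -> critical_set e beta L S ->
    (forall x y, e x y -> x \notin K -> y \in K -> beta x y < L) ->
  nontrivial_balanced_shift e beta.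
Proof.
move=> kK sS KS critK critS enter_lt.
have [d d_gt0 d_gap] := exists_pos_gap (F := fun pr : V * V => beta pr.1 pr.2)
  (P := [pred pr : V * V | [&& e pr.1 pr.2, pr.1 \notin K & pr.2 \in K]])
  (fun pr => ltac:(case/and3P; apply: enter_lt)).
pose u x := if x \in K then d else 0.
have u_K : {in K &, forall x y, u x = u y} by move=> x y xK yK; rewrite /u xK yK.
have u_S : {in S &, forall x y, u x = u y}.
  by move=> x y xS yS; rewrite /u (disjointFl KS xS) (disjointFl KS yS).
set bt := shift beta u.
have bt_le x y : e x y -> bt x y <= L.
  move=> exy; have := L_max exy; rewrite /bt /shift /u.
  case: ifP => yK; case: ifP => xK; try lra.
  by have := d_gap (x, y); rewrite /= exy xK yK => /(_ isT); lra.
pose C := K :|: S.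
have kC : k \in C by rewrite inE kK.
have sC : s \in C by rewrite inE sS orbT.
have critC : critical_set e bt L C.
  by apply: critical_setU; apply: critical_set_shift.
have [p' bal'] := exists_balanced_shift (contract_fun C k e bt)
  (strongly_connected_contract (C := C) (c0 := k) e_sc).
pose P x := u x + p' (contract C k x).
exists P; split.
  apply: balanced_ext (balanced_shift_uncontract kC bt_le critC bal') => x y _.
  by rewrite /bt shiftD.
(* The contraction identifies s and k, so P k = P s + d. *)
apply: (connect_nonconst_edge (p := P) (@e_sc s k isT isT)).
by rewrite /P /u kK (disjointFl KS sS) !contract_in // add0r eq_sym -subr_eq0 addrK gt_eqF.
Qed.

Lemma critical_sink s : N s -> (forall y, connect T s y -> connect T y s) ->
  critical_set e beta L [set y | connect T s y].
Proof.
move=> Ns s_term; apply: top_critical_edges => y; rewrite inE => sy.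
have S_out z : connect T s z -> exists z', T z z'.
  move=> /connectP[t + ->]; case/lastP: t => [|t x] /=.
    by case: (balanced_thr_edges beta_bal Ns) => _ [z' Tsz'] _; exists z'.
  rewrite rcons_path last_rcons => /andP[_ /thr_edge_nonisolated[_]].
  by case/(balanced_thr_edges beta_bal) => _ [z' Txz']; exists z'.
have [[z sz Tzy] [z' sz' Tyz']] := terminal_cycle_edges s_term S_out sy.
by split; [exists z | exists z']; rewrite ?inE.
Qed.

Lemma critical_source k : N k -> (forall y, connect T y k -> connect T k y) ->
  critical_set e beta L [set y | connect T y k].
Proof.
move=> Nk k_src; pose Tr := [rel x y | T y x].
have k_term y : connect Tr k y -> connect Tr y k by rewrite !connect_rev; apply: k_src.
apply: top_critical_edges => y; rewrite inE => yk.
have ky : connect Tr k y by rewrite connect_rev.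
have Tr_out z : connect Tr k z -> exists z', Tr z z'.
  rewrite connect_rev => /connectP[[|x t] /= + def_k].
    by rewrite -def_k; case: (balanced_thr_edges beta_bal Nk) => [[z' Tz'k] _] _; exists z'.
  case/andP=> /thr_edge_nonisolated[+ _] _.
  by case/(balanced_thr_edges beta_bal) => [[z' Tz'z] _]; exists z'.
have [[z kz Tyz] [z' kz' Tz'y]] := terminal_cycle_edges k_term Tr_out ky.
by rewrite !connect_rev in kz kz'; split; [exists z' | exists z]; rewrite ?inE.
Qed.

Lemma top_source_sink : ~ G_thr_strongly_connected e beta L ->
  exists (K S : {set V}) k s, [/\ k \in K, s \in S, [disjoint K & S],
    critical_set e beta L K /\ critical_set e beta L S &
    forall x y, e x y -> x \notin K -> y \in K -> beta x y < L].
Proof.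
move=> /not_strongly_connected_on[u1 [v1 [Nu1 Nv1 not_uv]]].
have [k Nk k_term] := exists_terminal (F := [rel x y | T y x]) Nu1
  (fun x y _ Tyx => (thr_edge_nonisolated Tyx).1).
have k_src y : connect T y k -> connect T k y.
  by have k_term' := k_term y; rewrite !connect_rev in k_term'.
pose K := [set y | connect T y k].
have K_pred x y : T x y -> y \in K -> x \in K.
  by move=> Txy; rewrite !inE; apply: connect_trans (connect1 Txy).
have [s0 Ns0 s0K] : exists2 s0, N s0 & s0 \notin K.
  case: (boolP (u1 \in K)) => [u1K|]; last by exists u1.
  exists v1 => //; apply: contra not_uv; rewrite !inE in u1K * => v1k.
  exact: connect_trans u1K (k_src _ v1k).
have outside_K x y : N x && (x \notin K) -> T x y -> N y && (y \notin K).
  move=> /andP[_ xK] Txy; rewrite (thr_edge_nonisolated Txy).2 /=.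
  by apply: contra xK; apply: K_pred.
have [s /andP[Ns sK] s_term] := exists_terminal (F := T)
  (P := fun x => N x && (x \notin K)) (introT andP (conj Ns0 s0K)) outside_K.
exists K, [set y | connect T s y], k, s; split; rewrite ?inE ?connect0 //.
- rewrite disjoint_subset; apply/subsetP => y; rewrite !inE => yk.
  by apply: contra sK => sy; rewrite inE (connect_trans sy yk).
- by split; [apply: critical_source | apply: critical_sink].
- move=> x y exy xK yK; rewrite lt_neqAle L_max // andbT.
  apply: contra xK => /eqP bxy; apply: K_pred yK.
  by rewrite /thr_edge exy bxy lexx.
Qed.

Lemma nontrivial_of_top_contraction a1 c1 w0 :
    (forall (V' : finType) (e' : rel V') (beta' : V' -> V' -> R), (#|V'| < #|V|)%N ->
       strongly_connected e' -> balanced e' beta' ->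
       (exists w, ~ G_thr_strongly_connected e' beta' w) ->
       nontrivial_balanced_shift e' beta') ->
    G_thr_strongly_connected e beta L -> N a1 -> N c1 -> c1 != a1 ->
    ~ G_thr_strongly_connected e beta w0 ->
  nontrivial_balanced_shift e beta.
Proof.
move=> IHV top_sc Na1 Nc1 c1a1 not_sc0; set C := [set x | N x].
have a1C : a1 \in C by rewrite inE.
have c1C : c1 \in C by rewrite inE.
have w0L : w0 <= L.
  rewrite leNgt; apply/negP => Lw0; apply: not_sc0; apply: thr_sc_of_lt => x y exy.
  exact: le_lt_trans (L_max exy) Lw0.
have bal_c := (balanced_contract a1C L_max top_critical).1 beta_bal.
have not_sc_c : ~ G_thr_strongly_connected (contract_rel C a1 e) (contract_fun C a1 e beta) w0.
  move=> sc_c; apply: not_sc0; apply: (thr_sc_uncontract a1C) sc_c => x y.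
  by rewrite !inE => Nx Ny; apply: connect_thr_le w0L (top_sc x y Nx Ny).
have [p' [bal' [X [Y [eXY pXY]]]]] := IHV _ _ _ (card_contracted c1C c1a1)
  (strongly_connected_contract e_sc) bal_c (ex_intro _ w0 not_sc_c).
exists (fun v => p' (contract C a1 v)).
split; first exact: (balanced_shift_uncontract a1C L_max top_critical bal').
by case/existsP: eXY => -[x y] /and3P[/eqP xX /eqP yY exy]; exists x, y; rewrite /= xX yY.
Qed.

Lemma top_loop a : N a -> (forall x, N x -> x = a) ->
  [/\ e a a, beta a a = L & forall x y, e x y -> ~~ loop_at a x y -> beta x y < L].
Proof.
move=> Na top_a; have [[u Tua] _] := balanced_thr_edges beta_bal Na.
have [eaa baa] : e a a /\ beta a a = L.
  by move: (Tua); rewrite (top_a u (thr_edge_nonisolated Tua).1) => /top_edge.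
split=> // x y exy; apply: contraR; rewrite -leNgt => Lb.
have [/top_a -> /top_a ->] : N x /\ N y by apply: thr_edge_nonisolated; rewrite /thr_edge exy.
by rewrite /loop_at !eqxx.
Qed.

Lemma nontrivial_of_top_loop a w0 :
    (forall beta' : V -> V -> R,
       (size (edge_values e beta') < size (edge_values e beta))%N ->
       strongly_connected e -> balanced e beta' ->
       (exists w, ~ G_thr_strongly_connected e beta' w) ->
       nontrivial_balanced_shift e beta') ->
    N a -> (forall x, N x -> x = a) -> ~ G_thr_strongly_connected e beta w0 ->
  nontrivial_balanced_shift e beta.
Proof.
move=> IHm Na top_a not_sc0; have [eaa baa off_lt] := top_loop Na top_a.
have [u0 [v0 [N0u N0v not_uv]]] := not_strongly_connected_on not_sc0.
have [z N0z za] : exists2 z, nonisolated (thr_edge e beta w0) z & z != a.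
  case: (eqVneq u0 a) => [ua|]; last by exists u0.
  by exists v0 => //; apply: contra not_uv => /eqP va; rewrite ua va connect0.
have [x _ exz] := connect_in_edge eaa (@e_sc a z isT isT).
pose off := [pred pr : V * V | e pr.1 pr.2 && ~~ loop_at a pr.1 pr.2].
have off_xz : off (x, z) by rewrite /= exz /loop_at (negbTE za) andbF.
case: (@arg_maxP _ _ _ _ off (fun pr => beta pr.1 pr.2) off_xz).
move=> -[a2 b2] /andP[/= eab2 off2] max2; set L2 := beta a2 b2.
have L2_max x' y' : e x' y' -> ~~ loop_at a x' y' -> beta x' y' <= L2.
  by move=> exy nl; apply: (max2 (x', y')); rewrite /= exy.
have L2_lt : L2 < beta a a by rewrite baa off_lt.
have w0L2 : w0 <= L2.
  rewrite leNgt; apply/negP => L2w0.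
  have on_loop x' y' : e x' y' -> w0 <= beta x' y' -> loop_at a x' y'.
    move=> exy w0b; apply: contraT => nl.
    by have := L2_max _ _ exy nl; rewrite leNgt (lt_le_trans L2w0 w0b).
  have N0_a y : nonisolated (thr_edge e beta w0) y -> y = a.
    by case/existsP=> t /orP[] /andP[et wt]; have /andP[/eqP ? /eqP ?] := on_loop _ _ et wt.
  by move: not_uv; rewrite (N0_a _ N0u) (N0_a _ N0v) connect0.
have [p [bal_p nonconst]] := IHm _ (size_edge_values_lower_loop eaa L2_lt L2_max eab2 off2 erefl)
  e_sc (balanced_lower_loop eaa L2_max beta_bal)
  (ex_intro _ w0 (fun sc => not_sc0 (thr_sc_lower_loop eaa L2_lt w0L2 sc))).
by exists p; split=> //; apply: balanced_raise_loop bal_p.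
Qed.

End TopLevel.

Lemma nontrivial_shift_step (R : realFieldType) (V : finType) (e : rel V)
    (beta : V -> V -> R) :
  (forall (V' : finType) (e' : rel V') (beta' : V' -> V' -> R), (#|V'| < #|V|)%N ->
     strongly_connected e' -> balanced e' beta' ->
     (exists w, ~ G_thr_strongly_connected e' beta' w) ->
     nontrivial_balanced_shift e' beta') ->
  (forall (e' : rel V) (beta' : V -> V -> R),
     (size (edge_values e' beta') < size (edge_values e beta))%N ->
     strongly_connected e' -> balanced e' beta' ->
     (exists w, ~ G_thr_strongly_connected e' beta' w) ->
     nontrivial_balanced_shift e' beta') ->
  strongly_connected e -> balanced e beta ->
  (exists w, ~ G_thr_strongly_connected e beta w) -> nontrivial_balanced_shift e beta.
Proof.
move=> IHV IHm e_sc beta_bal [w0 not_sc0].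
have [u0 [_ [N0u _ _]]] := not_strongly_connected_on not_sc0.
pose E := [pred pr : V * V | e pr.1 pr.2].
have [pr0 epr0] : exists pr, E pr.
  by case/existsP: N0u => t /orP[] /andP[et _]; [exists (t, u0) | exists (u0, t)].
case: (arg_maxP (fun pr => beta pr.1 pr.2) epr0) => -[a1 b1] /= eab1 ab1_max.
set L := beta a1 b1.
have L_max x y : e x y -> beta x y <= L by move=> exy; apply: (ab1_max (x, y)).
set N := nonisolated (thr_edge e beta L).
have Tab1 : thr_edge e beta L a1 b1 by rewrite /thr_edge eab1 lexx.
have [Na1 _] := thr_edge_nonisolated Tab1.
have [top_sc|top_not_sc] := strongly_connected_on_dec N (thr_edge e beta L).
- case: (pickP [pred c | N c && (c != a1)]) => [c1 /andP[Nc1 c1a1] | single].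
    exact: (nontrivial_of_top_contraction e_sc beta_bal L_max IHV top_sc Na1 Nc1 c1a1 not_sc0).
  apply: (nontrivial_of_top_loop e_sc beta_bal L_max (IHm e)) Na1 _ not_sc0 => x Nx.
  by apply/eqP; move: (single x); rewrite /= /N Nx /= => /negbFE.
- have [K [S [k [s [kK sS KS [critK critS] enter_lt]]]]] :=
    top_source_sink beta_bal L_max top_not_sc.
  exact: (nontrivial_of_critical_pair e_sc L_max kK sS KS critK critS enter_lt).
Qed.

Theorem nontrivial_balanced_shift_of_thr (R : realFieldType) (V : finType) (e : rel V)
    (beta : V -> V -> R) :
  strongly_connected e -> balanced e beta ->
  (exists w, ~ G_thr_strongly_connected e beta w) -> nontrivial_balanced_shift e beta.
Proof.
move: V e beta; apply: (lex_card_ind (m := fun V e beta => size (edge_values e beta))).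
exact: nontrivial_shift_step.
Qed.

Theorem theorem1 (V : finType) (R : realFieldType) (e : rel V)
  (beta : V -> V -> R) :
  strongly_connected e -> balanced e beta ->
  (unique_balanced_in_class e beta <->
   forall w : R, G_thr_strongly_connected e beta w).
Proof.
move=> e_sc beta_bal; split; last exact: unique_balanced_of_thr_sc.
move=> beta_unique w.
have [//|not_sc] := strongly_connected_on_dec (nonisolated (thr_edge e beta w)) (thr_edge e beta w).
have [p [shift_bal [x [y [exy pxy]]]]] :=
  nontrivial_balanced_shift_of_thr e_sc beta_bal (ex_intro _ w not_sc).
case/negP: pxy; apply/eqP.
by have := beta_unique _ shift_bal (@equivalent_shift _ _ e beta p) x y exy; rewrite /shift; lra.
Qed.
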